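(* Let a shallow network with neurons $(V_0,V_1,V_2)$ and activation $\psi$ be given and let $\theta$ be a redundant parameter. Then there exist $\tilde V_1\subseteq V_1$ and an efficient parameter $\tilde\theta$ of the pruned network with neurons $(V_0,\tilde V_1,V_2)$ and activation $\psi$ such that $\Psi_\theta(x)=\Psi_{\tilde\theta}(x)$ for all $x\in\mathcal{X}$. Furthermore, if $\#V_2=1$ and $\theta$ is a critical point of a cost $J_{\mathbf m}(\vartheta)=\mathbb{E}_{\mathbf m}[\ell(\Psi_\vartheta(X),Y)]$ (for some loss $\ell$ and expectation $\mathbb{E}_{\mathbf m}$ induced by a distribution $\mathbb{P}_{\mathbf m}$, with $\ell$ and $\psi$ regular enough that derivatives may be moved into $\mathbb{E}_{\mathbf m}$), then $\tilde\theta$ is a critical point of the corresponding cost for the pruned network.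
   Context: Shallow network: finite pairwise disjoint $V_0,V_1,V_2$, activation $\psi$; $E=(V_0\times V_1)\cup(V_1\times V_2)$; parameters $\theta=(w,\beta)\in\mathbb{R}^E\times\mathbb{R}^{V_1\cup V_2}$; response $(\Psi_\theta(x))_l=\beta_l+\sum_{j\in V_1}\psi(\beta_j+\sum_{i\in V_0}x_iw_{ij})w_{jl}$; $w_{j\bullet}=(w_{jl})_{l\in V_2}$. $\mathcal{X}\subseteq\mathbb{R}^{V_0}$ is the support of the distribution of the input $X$. $\theta$ is efficient if (a) $w_{k\bullet}\neq0$ for all $k\in V_1$ and (b) the only $\lambda$ with $\lambda_\emptyset+\sum_{j\in V_1}\lambda_j\psi(\beta_j+\sum_ix_iw_{ij})=0$ for all $x\in\mathcal{X}$ is $\lambda\equiv0$; otherwise redundant. A network with no hidden neurons has only the output bias as parameter (and such a parameter is efficient). *)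

From HB Require Import structures.
From mathcomp Require Import all_boot all_order all_algebra.
From mathcomp Require Import all_classical all_reals all_analysis.
Set Implicit Arguments.
Unset Strict Implicit.
Unset Printing Implicit Defensive.
Import Order.TTheory GRing.Theory Num.Theory.
Import numFieldNormedType.Exports.
Local Open Scope classical_set_scope.
Local Open Scope ring_scope.

(* Shallow network with input neurons V0, hidden neurons H, output neurons V2.
   Pairwise disjointness of the neuron sets is automatic (distinct types).
   A parameter theta = (w, beta) in R^E x R^(H u V2), E = (V0 x H) u (H x V2),
   is encoded as a real function on the coordinate type
   (V0 * H) + (H * V2)  [weights w]  +  (H + V2)  [biases beta]. *)
Section Net.
Variables (R : realType) (V0 H V2 : finType).

Definition pcoord : Type := (((V0 * H) + (H * V2)) + (H + V2))%type.
Definition param : Type := pcoord -> R.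

Definition wIn (th : param) (i : V0) (j : H) : R := th (inl (inl (i, j))).
Definition wOut (th : param) (j : H) (l : V2) : R := th (inl (inr (j, l))).
Definition bHid (th : param) (j : H) : R := th (inr (inl j)).
Definition bOut (th : param) (l : V2) : R := th (inr (inr l)).

Definition response (psi : R -> R) (th : param) (x : V0 -> R) (l : V2) : R :=
  bOut th l + \sum_(j : H) psi (bHid th j + \sum_(i : V0) x i * wIn th i j) * wOut th j l.

(* efficiency w.r.t. the input set Xs; a network without hidden neurons
   is efficient by convention *)
Definition efficient (Xs : set (V0 -> R)) (psi : R -> R) (th : param) : Prop :=
  (#|H| = 0)%N \/
  ((forall k : H, exists l : V2, wOut th k l != 0) /\
   (forall (lam0 : R) (lam : H -> R),
      (forall x, Xs x ->
         lam0 + \sum_(j : H) lam j * psi (bHid th j + \sum_(i : V0) x i * wIn th i j) = 0) ->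
      lam0 = 0 /\ (forall j, lam j = 0))).

Definition redundant (Xs : set (V0 -> R)) (psi : R -> R) (th : param) : Prop :=
  ~ efficient Xs psi th.

Definition shift (th : param) (k : pcoord) (t : R) : param :=
  fun c => th c + (if c == k then t else 0).

Section Cost.
Variables (d : measure_display) (Omega : measurableType d)
  (Pm : probability Omega R) (Ty : Type) (loss : (V2 -> R) -> Ty -> R)
  (X : Omega -> V0 -> R) (Y : Omega -> Ty) (psi : R -> R).

Definition cost (th : param) : R :=
  Rintegral Pm setT (fun w => loss (response psi th (X w)) (Y w)).

Definition critical (th : param) : Prop :=
  forall k : pcoord,
    derivable (fun t => cost (shift th k t)) 0 1 /\
    derive1 (fun t => cost (shift th k t)) 0 = 0.

Definition lossline (th : param) (k : pcoord) (w : Omega) : R -> R :=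
  fun t => loss (response psi (shift th k t) (X w)) (Y w).

Definition deriv_interchange (th : param) (k : pcoord) : Prop :=
  Pm.-integrable setT (fun w => (loss (response psi th (X w)) (Y w))%:E) /\
  (forall w, derivable (lossline th k w) 0 1) /\
  Pm.-integrable setT (fun w => (derive1 (lossline th k w) 0)%:E) /\
  derivable (fun t => cost (shift th k t)) 0 1 /\
  derive1 (fun t => cost (shift th k t)) 0
    = Rintegral Pm setT (fun w => derive1 (lossline th k w) 0).
End Cost.
End Net.

(* support of the law of the input X : Omega -> R^V0 under P
   (w.r.t. the Euclidean = product topology on R^V0, written with sup-balls) *)
Definition input_support (R : realType) (V0 : finType) (d : measure_display)
  (Omega : measurableType d) (P : probability Omega R) (X : Omega -> V0 -> R)
  : set (V0 -> R) :=
  [set x | forall e : R, (0 < e)%R ->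
     (0%E < P [set w | forall i : V0, `|X w i - x i| < e]%R)%E].

From Pilot Require Import Defs.
From HB Require Import structures.
From mathcomp Require Import all_boot all_order all_algebra.
From mathcomp Require Import all_classical all_reals all_analysis.
From mathcomp Require Import ring.
Import Order.TTheory GRing.Theory Num.Theory.
Import numFieldNormedType.Exports.
Local Open Scope classical_set_scope.
Local Open Scope ring_scope.

(* While the pruned network is not efficient, one of its hidden neurons can be
   silenced (all outgoing weights made zero) without changing the response on
   the input support: either it is silent already, or its activation is an
   affine combination of the other activations on the support, and its
   outgoing weights can be moved onto the others along that relation.  Such a
   refit leaves the inner layer alone and keeps silent neurons silent; with a
   single output this means that each neuron's outgoing weight is merely
   rescaled, so every partial derivative of the cost at the refitted parameter
   is a multiple of one at the original parameter and criticality survives.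
   The silent neurons are finally deleted. *)

Section Calculus.
Variable R : realType.

Lemma derivable_comp (f g : R -> R) (x : R) :
  derivable f x 1 -> derivable g (f x) 1 -> derivable (g \o f) x 1.
Proof.
move=> /derivable1_diffP df /derivable1_diffP dg.
exact/derivable1_diffP/differentiable_comp.
Qed.

Lemma derivable_increment (f : R -> R) (p a W x : R) :
  (forall z, derivable f z 1) ->
  derivable (fun t => (f (p + a * t) - f p) * W) x 1.
Proof.
move=> df; apply: (@derivable_comp (fun t => p + a * t)
  (fun s => (f s - f p) * W)).
  apply: derivableD; first exact: derivable_cst.
  by apply: derivableM; [exact: derivable_cst | exact: derivable_id].
apply: derivableM; last exact: derivable_cst.
by apply: derivableB; [exact: df | exact: derivable_cst].
Qed.

Lemma derive1_comp_scale (h v : R -> R) (c x : R) :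
  v x = 0 -> derivable v x 1 -> derivable h 0 1 ->
  derive1 (fun t => h (c * v t)) x = c * derive1 (fun t => h (v t)) x.
Proof.
move=> vx0 dv dh.
have dcv : derivable (fun t => c * v t) x 1.
  by apply: derivableM => //; exact: derivable_cst.
have e1 := @derive1_comp R (fun t => c * v t) h x dcv.
have e2 := @derive1_comp R v h x dv.
rewrite /= vx0 mulr0 in e1 e2.
rewrite -[LHS]/(derive1 (h \o (fun t => c * v t)) x).
by rewrite (e1 dh) (e2 dh) derive1Ml // mulrCA.
Qed.
End Calculus.

Lemma Rintegral_ae_eq {R : realType} {d : measure_display} {T : measurableType d}
    {mu : {measure set T -> \bar R}} {f g : T -> R} :
  mu.-integrable setT (EFin \o f) -> mu.-integrable setT (EFin \o g) ->
  {ae mu, forall w, f w = g w} -> Rintegral mu setT f = Rintegral mu setT g.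
Proof.
move=> /measurable_int mf /measurable_int mg ae; rewrite /Rintegral; congr fine.
by apply: ae_eq_integral => //; apply: filterS ae => w /= ->.
Qed.

Lemma nontrivial_relation {R : nzRingType} {T : Type} (Xs : set T) {I : finType}
    (f : T -> I -> R) :
  (#|I| != 0)%N ->
  ~ (forall lam0 (lam : I -> R),
       (forall x, Xs x -> lam0 + \sum_j lam j * f x j = 0) ->
       lam0 = 0 /\ forall j, lam j = 0) ->
  exists lam0 (lam : I -> R) (j0 : I),
    lam j0 != 0 /\ forall x, Xs x -> lam0 + \sum_j lam j * f x j = 0.
Proof.
move=> nI ntriv.
have [lam0 [lam [rel nz]]] : exists lam0 (lam : I -> R),
    (forall x, Xs x -> lam0 + \sum_j lam j * f x j = 0) /\
    ~ (lam0 = 0 /\ forall j, lam j = 0).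
  apply: contrapT => h; apply: ntriv => lam0 lam rel.
  by apply: contrapT => nz; apply: h; exists lam0, lam.
have [[j0 lj0]|all0] := pselect (exists j, lam j != 0).
  by exists lam0, lam, j0.
have {}all0 j : lam j = 0.
  by apply/eqP/negPn/negP => nzj; apply: all0; exists j.
have noXs x : ~ Xs x.
  move=> xs; apply: nz; split => //.
  by have := rel x xs; rewrite big1 ?addr0 // => j _; rewrite all0 mul0r.
have /card_gt0P [j0 _] : (0 < #|I|)%N by rewrite lt0n.
exists 0, (fun j => (j == j0)%:R), j0.
by split => [|x /noXs //]; rewrite eqxx oner_eq0.
Qed.

Section Network.
Context {R : realType} {V0 V2 : finType}.
Variable psi : R -> R.

Section Layers.
Context {H : finType}.
Implicit Types (th : param R V0 H V2) (x : V0 -> R) (Xs : set (V0 -> R)).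

Definition preact th x (j : H) : R := bHid th j + \sum_i x i * wIn th i j.

Definition silent th (j : H) : Prop := forall l, wOut th j l = 0.

Lemma responseE th x l :
  response psi th x l = bOut th l + \sum_j psi (preact th x j) * wOut th j l.
Proof. by []. Qed.

Lemma wOut_shift th k t j l :
  wOut (Defs.shift th k t) j l = wOut th j l + (if inl (inr (j, l)) == k then t else 0).
Proof. by []. Qed.

Lemma bOut_shift th k t l :
  bOut (Defs.shift th k t) l = bOut th l + (if inr (inr l) == k then t else 0).
Proof. by []. Qed.

Lemma eq_coord_in (i i' : V0) (j j' : H) :
  (inl (inl (i, j)) == inl (inl (i', j')) :> pcoord V0 H V2) = (i == i') && (j == j').
Proof. by []. Qed.

Lemma eq_coord_out (j j' : H) (l l' : V2) :
  (inl (inr (j, l)) == inl (inr (j', l')) :> pcoord V0 H V2) = (j == j') && (l == l').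
Proof. by []. Qed.

Lemma eq_coord_outbias (l l' : V2) :
  (inr (inr l) == inr (inr l') :> pcoord V0 H V2) = (l == l').
Proof. by []. Qed.

Lemma preact_shift_in th x i j0 t j :
  preact (Defs.shift th (inl (inl (i, j0))) t) x j =
  preact th x j + (if j == j0 then x i * t else 0).
Proof.
rewrite /preact /bHid /wIn /Defs.shift /= addr0 -addrA; congr (_ + _).
under eq_bigr => i' _ do rewrite eq_coord_in mulrDr.
rewrite big_split /=; congr (_ + _).
have [_|_] := eqVneq j j0; last by rewrite big1 // => i' _; rewrite andbF mulr0.
rewrite (bigD1 i) //= !eqxx big1 ?addr0 // => i' /negbTE ->.
by rewrite mulr0.
Qed.

Lemma preact_shift_bias th x j0 t j :
  preact (Defs.shift th (inr (inl j0)) t) x j =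
  preact th x j + (if j == j0 then t else 0).
Proof.
rewrite /preact /bHid /wIn /Defs.shift /=.
under eq_bigr => i _ do rewrite addr0.
by rewrite addrAC.
Qed.

Lemma preact_shift_out th x j0 l0 t :
  preact (Defs.shift th (inl (inr (j0, l0))) t) x =1 preact th x.
Proof.
move=> j; rewrite /preact /bHid /wIn /Defs.shift /= addr0.
by under eq_bigr => i _ do rewrite addr0.
Qed.

Lemma preact_shift_outbias th x l0 t :
  preact (Defs.shift th (inr (inr l0)) t) x =1 preact th x.
Proof.
move=> j; rewrite /preact /bHid /wIn /Defs.shift /= addr0.
by under eq_bigr => i _ do rewrite addr0.
Qed.

Lemma response_perturb_preact th th' x j0 d :
  (forall j, preact th' x j = preact th x j + (if j == j0 then d else 0)) ->
  (forall j l, wOut th' j l = wOut th j l) -> (forall l, bOut th' l = bOut th l) ->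
  forall l, response psi th' x l = response psi th x l +
    (psi (preact th x j0 + d) - psi (preact th x j0)) * wOut th j0 l.
Proof.
move=> hpre hw hb l; rewrite !responseE hb -addrA; congr (_ + _).
under eq_bigr => j _ do rewrite hpre hw.
rewrite (bigD1 j0) //= [in RHS](bigD1 j0) //= eqxx.
under eq_bigr => j /negbTE -> do rewrite addr0.
by rewrite addrAC mulrBl addrCA subrr addr0 addrC.
Qed.

Lemma response_shift_in th x i j t l :
  response psi (Defs.shift th (inl (inl (i, j))) t) x l = response psi th x l +
    (psi (preact th x j + x i * t) - psi (preact th x j)) * wOut th j l.
Proof.
by apply: response_perturb_preact => [j'|j' l'|l']; rewrite ?preact_shift_in //
  ?wOut_shift ?bOut_shift /= addr0.
Qed.

Lemma response_shift_bias th x j t l :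
  response psi (Defs.shift th (inr (inl j)) t) x l = response psi th x l +
    (psi (preact th x j + t) - psi (preact th x j)) * wOut th j l.
Proof.
by apply: response_perturb_preact => [j'|j' l'|l']; rewrite ?preact_shift_bias //
  ?wOut_shift ?bOut_shift /= addr0.
Qed.

Lemma response_shift_out th x j0 l0 t l :
  response psi (Defs.shift th (inl (inr (j0, l0))) t) x l =
  response psi th x l + t * (if l == l0 then psi (preact th x j0) else 0).
Proof.
rewrite !responseE bOut_shift /= addr0 -addrA; congr (_ + _).
under eq_bigr => j _ do rewrite preact_shift_out wOut_shift eq_coord_out mulrDr.
rewrite big_split /=; congr (_ + _).
have [_|_] := eqVneq l l0; last by rewrite mulr0 big1 // => j _; rewrite andbF mulr0.
rewrite (bigD1 j0) //= !eqxx big1 ?addr0 => [|j /negbTE ->]; last by rewrite mulr0.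
by rewrite mulrC.
Qed.

Lemma response_shift_outbias th x l0 t l :
  response psi (Defs.shift th (inr (inr l0)) t) x l =
  response psi th x l + t * (l == l0)%:R.
Proof.
rewrite !responseE bOut_shift /= addrAC; congr (_ + _ + _).
  by apply: eq_bigr => j _; rewrite preact_shift_outbias wOut_shift /= addr0.
by rewrite eq_coord_outbias; case: (l == l0); rewrite ?mulr1 ?mulr0.
Qed.

Definition refits Xs th th' : Prop :=
  [/\ forall x, preact th' x =1 preact th x,
      forall j, silent th j -> silent th' j
    & forall x, Xs x -> response psi th' x =1 response psi th x].

Lemma refits_refl Xs th : refits Xs th th.
Proof. by []. Qed.

Lemma refits_trans Xs th1 th2 th3 :
  refits Xs th1 th2 -> refits Xs th2 th3 -> refits Xs th1 th3.
Proof.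
move=> [p12 s12 r12] [p23 s23 r23]; split=> [x j|j /s12/s23 //|x xs l].
  by rewrite p23 p12.
by rewrite r23 // r12.
Qed.

(* The relation [lam0 + \sum_j lam j * psi_j = 0] expresses [psi_js] through
   the other activations; the outgoing weights of [js] are moved along it. *)
Definition absorb (lam0 : R) (lam : H -> R) (js : H) th : param R V0 H V2 :=
  fun c => match c with
  | inl (inr (j, l)) => wOut th j l - lam j / lam js * wOut th js l
  | inr (inr l) => bOut th l - lam0 / lam js * wOut th js l
  | _ => th c
  end.

Section Absorb.
Variables (lam0 : R) (lam : H -> R) (js : H).

Lemma preact_absorb th x : preact (absorb lam0 lam js th) x =1 preact th x.
Proof. by []. Qed.

Lemma wOut_absorb th j l :
  wOut (absorb lam0 lam js th) j l = wOut th j l - lam j / lam js * wOut th js l.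
Proof. by []. Qed.

Lemma bOut_absorb th l :
  bOut (absorb lam0 lam js th) l = bOut th l - lam0 / lam js * wOut th js l.
Proof. by []. Qed.

Lemma response_absorb th x l :
  response psi (absorb lam0 lam js th) x l = response psi th x l -
    wOut th js l / lam js * (lam0 + \sum_j lam j * psi (preact th x j)).
Proof.
rewrite !responseE bOut_absorb.
under eq_bigr => j _ do rewrite preact_absorb wOut_absorb.
have -> : \sum_j psi (preact th x j) * (wOut th j l - lam j / lam js * wOut th js l)
    = \sum_j psi (preact th x j) * wOut th j l -
      wOut th js l / lam js * \sum_j lam j * psi (preact th x j).
  by rewrite mulr_sumr -sumrB; apply: eq_bigr => j _; ring.
ring.
Qed.

Lemma silent_absorb_pivot th : lam js != 0 -> silent (absorb lam0 lam js th) js.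
Proof. by move=> nz l; rewrite wOut_absorb divff // mul1r subrr. Qed.

Lemma silent_absorb th j :
  silent th j -> lam j = 0 -> silent (absorb lam0 lam js th) j.
Proof. by move=> sj lj l; rewrite wOut_absorb sj lj mul0r mul0r subrr. Qed.

Lemma refits_absorb Xs th :
  (forall x, Xs x -> lam0 + \sum_j lam j * psi (preact th x j) = 0) ->
  (forall j, silent th j -> lam j = 0) ->
  refits Xs th (absorb lam0 lam js th).
Proof.
move=> rel sil; split=> [//|j sj|x xs l]; first exact: silent_absorb (sil j sj).
by rewrite response_absorb rel // mulr0 subr0.
Qed.
End Absorb.

Section Prune.
Variable S : {set H}.

Definition embed_coord (c : pcoord V0 {j : H | j \in S} V2) : pcoord V0 H V2 :=
  match c with
  | inl (inl (i, j)) => inl (inl (i, val j))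
  | inl (inr (j, l)) => inl (inr (val j, l))
  | inr (inl j) => inr (inl (val j))
  | inr (inr l) => inr (inr l)
  end.

Definition prune th : param R V0 {j : H | j \in S} V2 :=
  fun c => th (embed_coord c).

Lemma embed_coord_inj : injective embed_coord.
Proof.
move=> [[[i j]|[j l]]|[j|l]] [[[i' j']|[j' l']]|[j'|l']] //= [].
- by move=> -> /val_inj ->.
- by move=> /val_inj -> ->.
- by move=> /val_inj ->.
- by move=> ->.
Qed.

Lemma shift_prune th k t :
  Defs.shift (prune th) k t = prune (Defs.shift th (embed_coord k) t).
Proof.
by apply/funext => c; rewrite /prune /Defs.shift (inj_eq embed_coord_inj).
Qed.

Lemma silent_shift_embed th k t j :
  j \notin S -> silent th j -> silent (Defs.shift th (embed_coord k) t) j.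
Proof.
move=> jS sj l; rewrite wOut_shift sj add0r.
case: k => [[[i j']|[j' l']]|[j'|l']] //=.
by case: eqP => // -[ej _]; rewrite ej (valP j') in jS.
Qed.

Lemma sum_over_support (F : H -> R) :
  (forall j, j \notin S -> F j = 0) ->
  \sum_(k : {j : H | j \in S}) F (val k) = \sum_j F j.
Proof.
move=> F0; rewrite -big_sub big_mkcond /=.
by apply: eq_bigr => j _; case: ifP => // /negbT /F0.
Qed.

Lemma response_prune th x l :
  (forall j, j \notin S -> silent th j) ->
  response psi (prune th) x l = response psi th x l.
Proof.
move=> hS; rewrite [RHS]responseE.
rewrite -(sum_over_support (fun j => psi (preact th x j) * wOut th j l)) //.
by move=> j /hS ->; rewrite mulr0.
Qed.
End Prune.

Lemma silence_redundant_neuron Xs (S : {set H}) th :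
  ~ efficient Xs psi (prune S th) ->
  exists2 k, k \in S & exists2 th', refits Xs th th' & silent th' k.
Proof.
move=> ne.
have nS : (#|{: {j : H | j \in S}}| != 0)%N by apply/eqP => S0; apply: ne; left.
have [[k kS sk]|loud] := pselect (exists2 k, k \in S & silent th k).
  by exists k => //; exists th => //; exact: refits_refl.
have loud_pruned (k : {j : H | j \in S}) : exists l, wOut (prune S th) k l != 0.
  apply: contrapT => nw; apply: loud; exists (val k) => [|l]; first exact: valP.
  by apply/eqP/negPn/negP => nz; apply: nw; exists l.
have [lam0 [lam [ks [nz rel]]]] :=
  nontrivial_relation Xs (fun x k => psi (preact th x (val k))) nS
    (fun nrel => ne (or_intror (conj loud_pruned nrel))).
pose lamS j := if insub j is Some k then lam k else 0.
have lamS_val k : lamS (val k) = lam k by rewrite /lamS valK.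
exists (val ks); first exact: valP.
exists (absorb lam0 lamS (val ks) th); last by apply: silent_absorb_pivot; rewrite lamS_val.
apply: refits_absorb => [x xs|j sj].
  rewrite -(sum_over_support S (fun j => lamS j * psi (preact th x j))).
    by under eq_bigr => k _ do rewrite lamS_val; exact: rel.
  by move=> j jS; rewrite /lamS insubN ?mul0r.
by rewrite /lamS; case: insubP => // k jS _; case: loud; exists j.
Qed.

Lemma exists_efficient_pruning Xs (S : {set H}) th :
  (forall j, j \notin S -> silent th j) ->
  exists (S' : {set H}) th', [/\ refits Xs th th', (forall j, j \notin S' -> silent th' j)
                   & efficient Xs psi (prune S' th')].
Proof.
move: {2}#|S|.+1 (ltnSn #|S|) => n.
elim: n S th => [//|n IH] S th hn hS.
have [eff|ne] := pselect (efficient Xs psi (prune S th)).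
  by exists S, th; split=> //; exact: refits_refl.
have [k kS [th1 fit1 sk]] := silence_redundant_neuron Xs S th ne.
have hn1 : (#|S :\ k| < n)%N by rewrite (cardsD1 k S) kS ltnS in hn.
have hS1 j : j \notin S :\ k -> silent th1 j.
  rewrite in_setD1 negb_and negbK => /orP[/eqP-> //|/hS].
  by case: fit1 => _ + _; apply.
have [S' [th' [fit' hS' eff']]] := IH (S :\ k) th1 hn1 hS1.
by exists S', th'; split=> //; exact: refits_trans fit1 fit'.
Qed.
End Layers.

Section Criticality.
Variables (d : measure_display) (Omega : measurableType d) (Pm : probability Omega R)
  (Ty : Type) (loss : (V2 -> R) -> Ty -> R) (X : Omega -> V0 -> R) (Y : Omega -> Ty).
Hypothesis interchange : forall (H : finType) (th : param R V0 H V2) (k : pcoord V0 H V2),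
  deriv_interchange Pm loss X Y psi th k.

Local Notation lossline := (lossline loss X Y psi).
Local Notation cost := (cost Pm loss X Y psi).

Lemma derive_cost_scale {H : finType} (th th' : param R V0 H V2) k k' (c : R) :
  {ae Pm, forall w, derive1 (lossline th' k' w) 0 = c * derive1 (lossline th k w) 0} ->
  derive1 (fun t => cost (Defs.shift th' k' t)) 0 =
  c * derive1 (fun t => cost (Defs.shift th k t)) 0.
Proof.
move=> ae; have [_ [_ [int [_ ->]]]] := interchange _ th k.
have [_ [_ [int' [_ ->]]]] := interchange _ th' k'.
rewrite (Rintegral_ae_eq int' _ ae) ?RintegralZl //.
exact: (integrableZl measurableT c int).
Qed.

Lemma critical_prune {H : finType} (S : {set H}) (th : param R V0 H V2) :
  (forall j, j \notin S -> silent th j) ->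
  critical Pm loss X Y psi th -> critical Pm loss X Y psi (prune S th).
Proof.
move=> hS crit k; have [_ [_ [_ [dk ->]]]] := interchange _ (prune S th) k.
split=> //.
have -> : lossline (prune S th) k = lossline th (embed_coord S k).
  apply/funext => w; apply/funext => t; rewrite /Defs.lossline shift_prune.
  congr loss; apply/funext => l; apply: response_prune => j jS.
  exact: silent_shift_embed (hS j jS).
have [_ [_ [_ [_ <-]]]] := interchange _ th (embed_coord S k).
exact: (crit _).2.
Qed.

Lemma lossline_refit_out {H : finType} (th th' : param R V0 H V2) k w
    (g : (H -> R) -> V2 -> R) :
  (forall th0 t x l, response psi (Defs.shift th0 k t) x l =
                     response psi th0 x l + t * g (preact th0 x) l) ->
  preact th' (X w) =1 preact th (X w) ->
  response psi th' (X w) =1 response psi th (X w) ->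
  lossline th' k w = lossline th k w.
Proof.
move=> shiftE pre resp; apply/funext => t; rewrite /Defs.lossline.
by congr loss; apply/funext => l; rewrite !shiftE resp (funext pre).
Qed.

Section OneOutput.
Hypotheses (one_output : #|V2| = 1%N) (dpsi : forall z, derivable psi z 1)
  (dloss : forall (y : Ty) (o : V2 -> R),
     derivable (fun t : R => loss (fun l => o l + t) y) 0 1).

Lemma scalar_out_weights {H : finType} {th th' : param R V0 H V2} {j : H} :
  (silent th j -> silent th' j) -> exists c, forall l, wOut th' j l = c * wOut th j l.
Proof.
move=> sil; have [l0 l0P] := fintype1 one_output.
have [z|nz] := eqVneq (wOut th j l0) 0.
  by exists 0 => l; rewrite mul0r; apply: sil => l'; rewrite (l0P l').
by exists (wOut th' j l0 / wOut th j l0) => l; rewrite (l0P l) divfK.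
Qed.

Lemma derive_lossline_hidden {H : finType} (th th' : param R V0 H V2) k j
    (a : (V0 -> R) -> R) (c : R) w :
  (forall th0 t x l, response psi (Defs.shift th0 k t) x l = response psi th0 x l +
     (psi (preact th0 x j + a x * t) - psi (preact th0 x j)) * wOut th0 j l) ->
  preact th' (X w) =1 preact th (X w) ->
  response psi th' (X w) =1 response psi th (X w) ->
  (forall l, wOut th' j l = c * wOut th j l) ->
  derive1 (lossline th' k w) 0 = c * derive1 (lossline th k w) 0.
Proof.
move=> shiftE pre resp scale; have [l0 l0P] := fintype1 one_output.
set p := preact th (X w) j.
set v := fun t => (psi (p + a (X w) * t) - psi p) * wOut th j l0.
set h := fun s => loss (fun l => response psi th (X w) l + s) (Y w).
have -> : lossline th' k w = fun t => h (c * v t).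
  apply/funext => t; rewrite /Defs.lossline /h; congr loss; apply/funext => l.
  by rewrite shiftE pre resp scale (l0P l) /v /p; ring.
have -> : lossline th k w = fun t => h (v t).
  apply/funext => t; rewrite /Defs.lossline /h; congr loss; apply/funext => l.
  by rewrite shiftE (l0P l).
apply: derive1_comp_scale; last exact: dloss.
  by rewrite /v mulr0 addr0 subrr mul0r.
exact: derivable_increment.
Qed.

Lemma critical_refit {H : finType} (Xs : set (V0 -> R)) (th th' : param R V0 H V2) :
  {ae Pm, forall w, Xs (X w)} -> refits Xs th th' ->
  critical Pm loss X Y psi th -> critical Pm loss X Y psi th'.
Proof.
move=> onXs [pre sil resp] crit k.
split; first by have [_ [_ [_ []]]] := interchange _ th' k.
suff [k0 [c ->]] : exists k0 c, derive1 (fun t => cost (Defs.shift th' k t)) 0 =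
    c * derive1 (fun t => cost (Defs.shift th k0 t)) 0.
  by rewrite (crit k0).2 mulr0.
case: k => [[[i j]|[j l]]|[j|l]].
- have [c sc] := scalar_out_weights (sil j).
  exists (inl (inl (i, j))), c; apply: derive_cost_scale; apply: filterS onXs => w xw.
  apply: (derive_lossline_hidden th th' _ j (fun x => x i)) => //; last exact: resp.
  by move=> *; apply: response_shift_in.
- exists (inl (inr (j, l))), 1; apply: derive_cost_scale; apply: filterS onXs => w xw.
  rewrite mul1r (lossline_refit_out th th' _ w (fun p l' => if l' == l then psi (p j) else 0)) //.
    by move=> *; apply: response_shift_out.
  exact: resp.
- have [c sc] := scalar_out_weights (sil j).
  exists (inr (inl j)), c; apply: derive_cost_scale; apply: filterS onXs => w xw.
  apply: (derive_lossline_hidden th th' _ j (fun _ => 1)) => //; last exact: resp.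
  by move=> *; rewrite mul1r; exact: response_shift_bias.
- exists (inr (inr l)), 1; apply: derive_cost_scale; apply: filterS onXs => w xw.
  rewrite mul1r (lossline_refit_out th th' _ w (fun _ l' => (l' == l)%:R)) //.
    by move=> *; apply: response_shift_outbias.
  exact: resp.
Qed.
End OneOutput.
End Criticality.
End Network.

Theorem proposition6p5 (R : realType) (V0 V1 V2 : finType) (psi : R -> R)
  (d : measure_display) (Omega : measurableType d) (P : probability Omega R)
  (X : Omega -> V0 -> R)
  (hX : forall i : V0, measurable_fun setT (fun w => X w i))
  (th : param R V0 V1 V2)
  (hred : redundant (input_support P X) psi th) :
  exists (S : {set V1}) (tth : param R V0 {j : V1 | j \in S} V2),
    efficient (input_support P X) psi tth /\
    (forall x, input_support P X x ->
       forall l : V2, response psi th x l = response psi tth x l) /\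
    ((#|V2| = 1)%N ->
      forall (Ty : Type) (loss : (V2 -> R) -> Ty -> R)
             (Pm : probability Omega R) (Y : Omega -> Ty),
      {ae Pm, forall w, input_support P X (X w)} ->
      (forall z : R, derivable psi z 1) ->
      (forall (y : Ty) (o : V2 -> R),
         derivable (fun t : R => loss (fun l => o l + t) y) 0 1) ->
      (forall (H : finType) (vth : param R V0 H V2) (k : pcoord V0 H V2),
         deriv_interchange Pm loss X Y psi vth k) ->
      critical Pm loss X Y psi th ->
      critical Pm loss X Y psi tth).
Proof.
have silent_off_all (j : V1) : j \notin [set: V1]%SET -> silent th j.
  by rewrite inE.
have [S [th' [fit silent_off eff]]] :=
  exists_efficient_pruning psi (input_support P X) _ th silent_off_all.
exists S, (prune S th'); split=> //; split.
  by move=> x xs l; rewrite response_prune //; case: fit => _ _ ->.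
move=> one_output Ty loss Pm Y onXs dpsi dloss interchange crit.
apply: critical_prune => //.
by move: fit crit; apply: critical_refit.
Qed.
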